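(* Let $S = \{ x \in \mathbb{R}^n \mid h_i^T x \leq 1,\ i = 1, \dots ,r \}$, $A \in \mathbb{R}^{n \times n}$, $\gamma \geq 0$, $c \in \mathbb{R}^n$, and consider the semidefinite program \begin{align*} \min_{x \in \mathbb{R}^n,\, Q \in \mathbb{S}^{n \times n},\, \lambda \in \mathbb{R}} \quad & c^T x\\ \textrm{s.t.} \quad & Q \succ 0, \\ & \begin{bmatrix} Q - A Q A^T & -A Q \\ -Q A^T & -Q \end{bmatrix} \succeq \lambda \begin{bmatrix} \gamma^2 I & 0 \\ 0 & -I \end{bmatrix}, \\ & h_i^T Q h_i \leq 1 \quad i = 1, \dots, r, \\ & \begin{bmatrix} Q & x \\ x^T & 1 \end{bmatrix} \succeq 0, \\ & \lambda \geq 0. \end{align*} Let $\tilde{S}^{\infty}_{\gamma}(A)$ be the projection to $x$-space of the feasible region of this program, and let $S^{\infty}_{\gamma}(A)$ be the set of $x \in S$ such that $f^t(x) \in S$ for all $t = 1,2,\dots$ and all maps $f(x) = Ax + g(x)$ with $g \in \{ g : \mathbb{R}^n \to \mathbb{R}^n \mid \|g(x)\| \leq \gamma \|x\|\ \forall x \in S\}$ ($\ell_2$ norm). Then $\tilde{S}^{\infty}_{\gamma}(A) \subseteq S^{\infty}_{\gamma}(A)$.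
   Context: $\mathbb{S}^{n \times n}$ denotes the space of real symmetric $n\times n$ matrices; $\succ$ and $\succeq$ denote positive definite and positive semidefinite orderings. *)

From HB Require Import structures.
From mathcomp Require Import all_boot all_order all_algebra.
Set Implicit Arguments. Unset Strict Implicit. Unset Printing Implicit Defensive.
Import Order.TTheory GRing.Theory Num.Theory.
Local Open Scope ring_scope.

Definition psd (R : rcfType) (m : nat) (M : 'M[R]_m) : Prop :=
  M^T = M /\ forall v : 'cV[R]_m, 0 <= (v^T *m M *m v) 0 0.

Definition pd (R : rcfType) (m : nat) (M : 'M[R]_m) : Prop :=
  M^T = M /\ forall v : 'cV[R]_m, v != 0 -> 0 < (v^T *m M *m v) 0 0.

Definition norm2 (R : rcfType) (n : nat) (v : 'cV[R]_n) : R :=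
  Num.sqrt (\sum_(i < n) v i 0 ^+ 2).

Definition polyS (R : rcfType) (n r : nat) (h : 'I_r -> 'cV[R]_n)
  (x : 'cV[R]_n) : Prop :=
  forall i : 'I_r, ((h i)^T *m x) 0 0 <= 1.

Definition sdp_feasible (R : rcfType) (n r : nat) (h : 'I_r -> 'cV[R]_n)
  (A : 'M[R]_n) (gamma : R) (x : 'cV[R]_n) (Q : 'M[R]_n) (lambda : R) : Prop :=
  [/\ pd Q,
      psd (block_mx (Q - A *m Q *m A^T) (- (A *m Q))
                    (- (Q *m A^T))      (- Q)
           - lambda *: block_mx ((gamma ^+ 2)%:M) 0 0 (- 1%:M)),
      (forall i : 'I_r, ((h i)^T *m Q *m h i) 0 0 <= 1),
      psd (block_mx Q x x^T (1%:M : 'M[R]_1)) &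
      0 <= lambda].

Definition S_tilde_inf (R : rcfType) (n r : nat) (h : 'I_r -> 'cV[R]_n)
  (A : 'M[R]_n) (gamma : R) (x : 'cV[R]_n) : Prop :=
  exists (Q : 'M[R]_n) (lambda : R), sdp_feasible h A gamma x Q lambda.

Definition S_inf (R : rcfType) (n r : nat) (h : 'I_r -> 'cV[R]_n)
  (A : 'M[R]_n) (gamma : R) (x : 'cV[R]_n) : Prop :=
  polyS h x /\
  forall g : 'cV[R]_n -> 'cV[R]_n,
    (forall y, polyS h y -> norm2 (g y) <= gamma * norm2 y) ->
    forall t : nat, (0 < t)%N ->
      polyS h (iter t (fun y => A *m y + g y) x).

(* Let E(Q) = { y | y y^T <= Q }.  The Schur-complement constraint puts x in E(Q),
   and h_i^T Q h_i <= 1 gives (h_i^T y)^2 <= 1 on E(Q), so E(Q) lies in S.  The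
   remaining LMI is an S-procedure certificate that E(Q) is invariant under
   y |-> A y + z whenever |z| <= gamma |y|: choosing w with w^T y = u^T z and
   |w| <= gamma |u| and testing the LMI at (u, w) gives
     (u^T (A y + z))^2 = ((A^T u + w)^T y)^2 <= (A^T u + w)^T Q (A^T u + w) <= u^T Q u.
   Hence every orbit of f(y) = A y + g(y) from x stays in E(Q), inside S. *)

From HB Require Import structures.
From mathcomp Require Import all_boot all_order all_algebra.
From mathcomp Require Import lra.
Import Order.TTheory GRing.Theory Num.Theory.
Set Implicit Arguments.
Unset Strict Implicit.
Unset Printing Implicit Defensive.
Local Open Scope ring_scope.

Section EllipsoidInvariance.
Variable R : rcfType.

Lemma mxE_add m k (M N : 'M[R]_(m, k)) i j : (M + N) i j = M i j + N i j.
Proof. by rewrite mxE. Qed.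

Lemma mxE_opp m k (M : 'M[R]_(m, k)) i j : (- M) i j = - M i j.
Proof. by rewrite mxE. Qed.

Lemma mxE_scale m k a (M : 'M[R]_(m, k)) i j : (a *: M) i j = a * M i j.
Proof. by rewrite mxE. Qed.

Definition mxE_lin := (mxE_add, mxE_opp, mxE_scale).

Lemma trmxZ m k a (M : 'M[R]_(m, k)) : (a *: M)^T = a *: M^T.
Proof. by apply/matrixP => i j; rewrite !mxE. Qed.

Lemma dotC n (u v : 'cV[R]_n) : (u^T *m v) 0 0 = (v^T *m u) 0 0.
Proof. by rewrite -[v in LHS]trmxK -trmx_mul mxE. Qed.

Lemma dotvv_sum n (v : 'cV[R]_n) : (v^T *m v) 0 0 = \sum_i v i 0 ^+ 2.
Proof. by rewrite mxE; apply: eq_bigr => i _; rewrite mxE expr2. Qed.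

Lemma dotvv_ge0 n (v : 'cV[R]_n) : 0 <= (v^T *m v) 0 0.
Proof. by rewrite dotvv_sum sumr_ge0 // => i _; rewrite sqr_ge0. Qed.

Lemma dotvv_eq0 n (v : 'cV[R]_n) : (v^T *m v) 0 0 = 0 -> v = 0.
Proof.
rewrite dotvv_sum => /eqP; rewrite psumr_eq0 => [/allP v0|i _]; last exact: sqr_ge0.
apply/matrixP => i j; rewrite (ord1 j) mxE.
by apply/eqP; rewrite -sqrf_eq0; apply: v0; rewrite mem_index_enum.
Qed.

Lemma dot_CauchySchwarz n (u z : 'cV[R]_n) :
  (u^T *m z) 0 0 ^+ 2 <= (u^T *m u) 0 0 * (z^T *m z) 0 0.
Proof.
have [/dotvv_eq0 -> | zz_neq0] := eqVneq ((z^T *m z) 0 0) 0.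
  by rewrite mulmx0 trmx0 mul0mx !mxE expr0n mulr0.
have zz_gt0 : 0 < (z^T *m z) 0 0 by rewrite lt_def zz_neq0 dotvv_ge0.
set t := (u^T *m z) 0 0 / (z^T *m z) 0 0.
have tzz : t * (z^T *m z) 0 0 = (u^T *m z) 0 0 by rewrite divfK.
have := dotvv_ge0 (u - t *: z).
rewrite (raddfB trmx) /= trmxZ mulmxBl !mulmxBr -!scalemxAl -!scalemxAr !mxE_lin (dotC z u).
nra.
Qed.

Lemma norm2_sqr n (v : 'cV[R]_n) : norm2 v ^+ 2 = (v^T *m v) 0 0.
Proof. by rewrite /norm2 sqr_sqrtr -dotvv_sum ?dotvv_ge0. Qed.

Lemma norm2_le_sqr n (gamma : R) (y z : 'cV[R]_n) : 0 <= gamma ->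
  norm2 z <= gamma * norm2 y -> (z^T *m z) 0 0 <= gamma ^+ 2 * (y^T *m y) 0 0.
Proof.
move=> gamma_ge0 /(lerXn2r 2); rewrite -!norm2_sqr exprMn; apply.
  exact: sqrtr_ge0.
by rewrite nnegrE mulr_ge0 ?sqrtr_ge0.
Qed.

Lemma quad_form_block_mx m1 m2 (Aul : 'M[R]_m1) Aur Adl (Adr : 'M[R]_m2)
    (u : 'cV[R]_m1) (w : 'cV[R]_m2) :
  (col_mx u w)^T *m block_mx Aul Aur Adl Adr *m col_mx u w =
  u^T *m Aul *m u + u^T *m Aur *m w + w^T *m Adl *m u + w^T *m Adr *m w.
Proof.
rewrite tr_col_mx mul_row_block !mul_row_col !mulmxDl.
by rewrite addrACA !addrA.
Qed.

Definition invariance_lmi n (A Q : 'M[R]_n) (lambda gamma : R) : 'M[R]_(n + n) :=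
  block_mx (Q - A *m Q *m A^T) (- (A *m Q)) (- (Q *m A^T)) (- Q)
  - lambda *: block_mx ((gamma ^+ 2)%:M) 0 0 (- 1%:M).

Lemma lmi_quad_bound n (A Q : 'M[R]_n) (lambda gamma : R) (u w : 'cV[R]_n) :
  psd (invariance_lmi A Q lambda gamma) ->
  ((A^T *m u + w)^T *m Q *m (A^T *m u + w)) 0 0
    + lambda * (gamma ^+ 2 * (u^T *m u) 0 0 - (w^T *m w) 0 0)
  <= (u^T *m Q *m u) 0 0.
Proof.
move=> [_ /(_ (col_mx u w))]; rewrite /invariance_lmi.
rewrite scale_block_mx opp_block_mx add_block_mx quad_form_block_mx.
rewrite !scaler0 !oppr0 !addr0 -[(gamma ^+ 2)%:M]scalemx1 scalerN.
rewrite !(mulmxDl, mulmxDr, mulmxBl, mulmxBr, mulmxN, mulNmx).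
rewrite -!scalemxAr -!scalemxAl.
rewrite (raddfD trmx) /= trmx_mul trmxK !(mulmxDl, mulmxDr) !mulmx1 !mulmxA !mxE_lin.
lra.
Qed.

(* [y y^T <= Q] in the Loewner order; for [Q > 0] this is the ellipsoid [y^T Q^-1 y <= 1]. *)
Definition in_ellipsoid n (Q : 'M[R]_n) (y : 'cV[R]_n) : Prop :=
  forall v : 'cV[R]_n, (v^T *m y) 0 0 ^+ 2 <= (v^T *m Q *m v) 0 0.

Lemma psd_block_in_ellipsoid n (Q : 'M[R]_n) (x : 'cV[R]_n) :
  psd (block_mx Q x x^T (1%:M : 'M[R]_1)) -> in_ellipsoid Q x.
Proof.
move=> [_ psdQx] v; set a := (v^T *m x) 0 0.
move: (psdQx (col_mx v (- a)%:M)); rewrite quad_form_block_mx tr_scalar_mx mulmx1.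
rewrite mul_mx_scalar !mul_scalar_mx -scalemxAl !mxE_lin (dotC x v) -/a.
rewrite [(_%:M) 0 0]mxE mulr1n.
lra.
Qed.

Lemma in_ellipsoid_polyS n r (h : 'I_r -> 'cV[R]_n) (Q : 'M[R]_n) y :
  (forall i, ((h i)^T *m Q *m h i) 0 0 <= 1) -> in_ellipsoid Q y -> polyS h y.
Proof. by move=> hQh Ey i; have := Ey (h i); have := hQh i; nra. Qed.

(* [w] is [B^T u] for the rank-one map [B = z y^T / |y|^2], which sends [y] to [z]
   and has operator norm at most [gamma]. *)
Lemma bounded_perturbation_adjoint n (gamma : R) (y z u : 'cV[R]_n) :
  (z^T *m z) 0 0 <= gamma ^+ 2 * (y^T *m y) 0 0 ->
  exists w : 'cV[R]_n,
    (w^T *m y) 0 0 = (u^T *m z) 0 0 /\ (w^T *m w) 0 0 <= gamma ^+ 2 * (u^T *m u) 0 0.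
Proof.
move=> zy; have zz_ge0 := dotvv_ge0 z.
have [yy0 | yy_neq0] := eqVneq ((y^T *m y) 0 0) 0.
  have z0 : z = 0.
    by apply/dotvv_eq0/eqP; rewrite eq_le zz_ge0 andbT; move: zy; rewrite yy0 mulr0.
  by exists 0; rewrite z0 trmx0 !mulmx0 !mul0mx mxE mulr_ge0 ?sqr_ge0 ?dotvv_ge0.
have yy_gt0 : 0 < (y^T *m y) 0 0 by rewrite lt_def yy_neq0 dotvv_ge0.
set t := (u^T *m z) 0 0 / (y^T *m y) 0 0.
exists (t *: y); rewrite trmxZ -!scalemxAl -scalemxAr !mxE_scale divfK //; split=> //.
have cs := dot_CauchySchwarz u z; have uu_ge0 := dotvv_ge0 u.
have t_yy : t * (y^T *m y) 0 0 = (u^T *m z) 0 0 by rewrite divfK.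
rewrite -(ler_pM2r yy_gt0); nra.
Qed.

Lemma in_ellipsoid_step n (A Q : 'M[R]_n) (lambda gamma : R) (y z : 'cV[R]_n) :
  psd (invariance_lmi A Q lambda gamma) ->
  0 <= lambda -> in_ellipsoid Q y ->
  (z^T *m z) 0 0 <= gamma ^+ 2 * (y^T *m y) 0 0 ->
  in_ellipsoid Q (A *m y + z).
Proof.
move=> lmi lambda_ge0 Ey zy u.
have [w [wy ww]] := bounded_perturbation_adjoint u zy.
have -> : (u^T *m (A *m y + z)) 0 0 = ((A^T *m u + w)^T *m y) 0 0.
  by rewrite (raddfD trmx) /= trmx_mul trmxK !mulmxDl mulmxDr !mxE_add wy mulmxA.
apply: le_trans (Ey _) _; apply: le_trans (lmi_quad_bound u w lmi).
by rewrite lerDl mulr_ge0 // subr_ge0.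
Qed.

End EllipsoidInvariance.

Theorem lemma26 (R : rcfType) (n r : nat) (h : 'I_r -> 'cV[R]_n)
  (A : 'M[R]_n) (gamma : R) (c : 'cV[R]_n) (hgamma : 0 <= gamma) :
  forall x : 'cV[R]_n, S_tilde_inf h A gamma x -> S_inf h A gamma x.
Proof.
move=> x [Q [lambda [_ lmi hQh schur lambda_ge0]]].
have Ex := psd_block_in_ellipsoid schur.
split=> [|g g_bound t _]; first exact: in_ellipsoid_polyS hQh Ex.
apply: (in_ellipsoid_polyS hQh); elim: t => [|t IH] //=.
apply: (in_ellipsoid_step lmi lambda_ge0 IH).
exact: norm2_le_sqr hgamma (g_bound _ (in_ellipsoid_polyS hQh IH)).
Qed.
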